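(* Let $a,b,c,q>0$, $0<p<1$, and consider $$\frac{dx}{dt}=x\left[\frac{(1-x)(x-p)}{1+qy}-ay\right],\qquad \frac{dy}{dt}=by\,(1-y-cx).$$ With $A_1=ac^2q+1$, $A_2=-(2acq+ac+p+1)$, $A_3=a+aq+p$, $\Delta=A_2^2-4A_1A_3$, and $E_{1*}=(x_1,1-cx_1)$, $E_{2*}=(x_2,1-cx_2)$ (for $\Delta>0$, $x_{1,2}=\frac{-A_2\mp\sqrt\Delta}{2A_1}$), $E_{3*}=(x_3,1-cx_3)$ (for $\Delta=0$, $x_3=-\frac{A_2}{2A_1}$): whenever these points are positive equilibria of the system, 1. $E_{1*}$ is a saddle; 2. $E_{2*}$ is a stable node; 3. $E_{3*}$ is a saddle-node.
   Context: Positive equilibrium means an equilibrium with both coordinates strictly positive. The conditions under which $E_{1*},E_{2*},E_{3*}$ are positive equilibria are those of the existence classification: e.g. for $\Delta>0$, $2A_1+A_2>0$, $0<c<1$ both $E_{1*},E_{2*}$ are positive; for $\Delta=0$, $2A_1+A_2>0$, $0<c<1$, $E_{3*}$ is positive. *)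

From Stdlib Require Import Reals.
From Coquelicot Require Import Coquelicot.
Open Scope R_scope.

Definition fX (a q p : R) (x y : R) : R :=
  x * ((1 - x) * (x - p) / (1 + q * y) - a * y).
Definition fY (b c : R) (x y : R) : R := b * y * (1 - y - c * x).

Definition is_equilibrium (f g : R -> R -> R) (x0 y0 : R) : Prop :=
  f x0 y0 = 0 /\ g x0 y0 = 0.

Definition is_positive_equilibrium (f g : R -> R -> R) (x0 y0 : R) : Prop :=
  0 < x0 /\ 0 < y0 /\ is_equilibrium f g x0 y0.

Definition dx (h : R -> R -> R) (x0 y0 : R) : R := Derive (fun x => h x y0) x0.
Definition dy (h : R -> R -> R) (x0 y0 : R) : R := Derive (fun y => h x0 y) y0.

Definition jac_tr (f g : R -> R -> R) (x0 y0 : R) : R := dx f x0 y0 + dy g x0 y0.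
Definition jac_det (f g : R -> R -> R) (x0 y0 : R) : R :=
  dx f x0 y0 * dy g x0 y0 - dy f x0 y0 * dx g x0 y0.

(** [l1], [l2] are the two eigenvalues (with multiplicity) of the Jacobian:
    its characteristic polynomial X^2 - tr X + det equals (X - l1)(X - l2). *)
Definition jac_eigenvalues (f g : R -> R -> R) (x0 y0 l1 l2 : R) : Prop :=
  l1 + l2 = jac_tr f g x0 y0 /\ l1 * l2 = jac_det f g x0 y0.

Definition is_saddle (f g : R -> R -> R) (x0 y0 : R) : Prop :=
  exists l1 l2, jac_eigenvalues f g x0 y0 l1 l2 /\ l1 < 0 /\ 0 < l2.

Definition is_stable_node (f g : R -> R -> R) (x0 y0 : R) : Prop :=
  exists l1 l2, jac_eigenvalues f g x0 y0 l1 l2 /\ l1 < 0 /\ l2 < 0.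

Definition dxx (h : R -> R -> R) (x0 y0 : R) : R :=
  Derive (fun x => Derive (fun x' => h x' y0) x) x0.
Definition dxy (h : R -> R -> R) (x0 y0 : R) : R :=
  Derive (fun y => Derive (fun x => h x y) x0) y0.
Definition dyy (h : R -> R -> R) (x0 y0 : R) : R :=
  Derive (fun y => Derive (fun y' => h x0 y') y) y0.

Definition hess_quad (h : R -> R -> R) (x0 y0 v1 v2 : R) : R :=
  dxx h x0 y0 * v1 ^ 2 + 2 * dxy h x0 y0 * v1 * v2 + dyy h x0 y0 * v2 ^ 2.

(** Saddle-node (codimension-one, quadratic type): the Jacobian has a simple
    zero eigenvalue and a nonzero one, and the quadratic coefficient of the
    flow restricted to the centre manifold, w . D^2F(v,v), is nonzero, where
    v (resp. w) is a right (resp. left) null vector of the Jacobian. *)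
Definition is_saddle_node (f g : R -> R -> R) (x0 y0 : R) : Prop :=
  (exists l, l <> 0 /\ jac_eigenvalues f g x0 y0 0 l) /\
  exists v1 v2 w1 w2 : R,
    (v1 <> 0 \/ v2 <> 0) /\ (w1 <> 0 \/ w2 <> 0) /\
    dx f x0 y0 * v1 + dy f x0 y0 * v2 = 0 /\
    dx g x0 y0 * v1 + dy g x0 y0 * v2 = 0 /\
    w1 * dx f x0 y0 + w2 * dx g x0 y0 = 0 /\
    w1 * dy f x0 y0 + w2 * dy g x0 y0 = 0 /\
    w1 * hess_quad f x0 y0 v1 v2 + w2 * hess_quad g x0 y0 v1 v2 <> 0.

(** Interior equilibria lie on the prey-free nullcline y = 1 - c x, and their
    abscissae are the roots of P(x) = A1 x^2 + A2 x + A3.  The whole proof rests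
    on one identity (Lemma [jac_det_at_equilibrium]): at such an equilibrium
      det J = b x y / (1 + q y) * P'(x),
    so the sign of det J is that of P'(x), which is -sqrt Delta at the smaller
    root, +sqrt Delta at the larger one and 0 at the double root. *)
From Stdlib Require Import Reals Lra.
From Coquelicot Require Import Coquelicot.
Open Scope R_scope.

Lemma real_roots_ordered (t d : R) :
  0 <= t ^ 2 - 4 * d -> exists l1 l2, l1 + l2 = t /\ l1 * l2 = d /\ l1 <= l2.
Proof.
  intros Hdisc.
  set (s := sqrt (t ^ 2 - 4 * d)).
  assert (Hs2 : s * s = t ^ 2 - 4 * d) by (apply sqrt_sqrt; exact Hdisc).
  assert (Hs0 : 0 <= s) by apply sqrt_pos.
  exists ((t - s) / 2), ((t + s) / 2).
  split; [field | split; [nra | lra]].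
Qed.

(** The discriminant of the characteristic polynomial is
    (J11 - J22)^2 + 4 J12 J21, hence nonnegative when J12 J21 >= 0. *)
Lemma jac_discriminant_nonneg (f g : R -> R -> R) (x0 y0 : R) :
  0 <= dy f x0 y0 * dx g x0 y0 ->
  0 <= jac_tr f g x0 y0 ^ 2 - 4 * jac_det f g x0 y0.
Proof.
  unfold jac_tr, jac_det; intros Hoff.
  pose proof (pow2_ge_0 (dx f x0 y0 - dy g x0 y0)).
  nra.
Qed.

Lemma saddle_of_neg_det (f g : R -> R -> R) (x0 y0 : R) :
  jac_det f g x0 y0 < 0 -> is_saddle f g x0 y0.
Proof.
  intros Hdet.
  destruct (real_roots_ordered (jac_tr f g x0 y0) (jac_det f g x0 y0))
    as (l1 & l2 & Hsum & Hprod & Hle).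
  { pose proof (pow2_ge_0 (jac_tr f g x0 y0)); lra. }
  exists l1, l2; split; [split; assumption|].
  split; nra.
Qed.

Lemma stable_node_of_sign_pattern (f g : R -> R -> R) (x0 y0 : R) :
  dy f x0 y0 < 0 -> dx g x0 y0 < 0 -> dy g x0 y0 < 0 ->
  0 < jac_det f g x0 y0 -> is_stable_node f g x0 y0.
Proof.
  intros H12 H21 H22 Hdet.
  assert (Htr : jac_tr f g x0 y0 < 0).
  { unfold jac_det in Hdet; unfold jac_tr.
    assert (0 < dy f x0 y0 * dx g x0 y0) by nra.
    assert (dx f x0 y0 < 0) by nra.
    lra. }
  destruct (real_roots_ordered (jac_tr f g x0 y0) (jac_det f g x0 y0))
    as (l1 & l2 & Hsum & Hprod & Hle).
  { apply jac_discriminant_nonneg; nra. }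
  exists l1, l2; split; [split; assumption|].
  split; nra.
Qed.

Lemma simple_zero_eigenvalue (f g : R -> R -> R) (x0 y0 : R) :
  jac_det f g x0 y0 = 0 -> jac_tr f g x0 y0 <> 0 ->
  exists l, l <> 0 /\ jac_eigenvalues f g x0 y0 0 l.
Proof.
  intros Hdet Htr.
  exists (jac_tr f g x0 y0); split; [exact Htr|].
  split; [ring | rewrite Hdet; ring].
Qed.

Lemma dx_fX (a q p x y : R) :
  dx (fX a q p) x y =
  (1 - x) * (x - p) / (1 + q * y) - a * y + x * ((1 + p - 2 * x) / (1 + q * y)).
Proof.
  unfold dx, fX, Rdiv.
  set (K := / (1 + q * y)).
  apply is_derive_unique; auto_derive; [auto | ring].
Qed.

Lemma dy_fX (a q p x y : R) :
  1 + q * y <> 0 ->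
  dy (fX a q p) x y = x * (- (1 - x) * (x - p) * q / (1 + q * y) ^ 2 - a).
Proof.
  intros Hden; unfold dy, fX.
  apply is_derive_unique; auto_derive; [auto | field; auto].
Qed.

Lemma dx_fY (b c x y : R) : dx (fY b c) x y = - b * y * c.
Proof. unfold dx, fY; apply is_derive_unique; auto_derive; [auto | ring]. Qed.

Lemma dy_fY (b c x y : R) : dy (fY b c) x y = b * (1 - y - c * x) - b * y.
Proof. unfold dy, fY; apply is_derive_unique; auto_derive; [auto | ring]. Qed.

Lemma dxx_fX (a q p x y : R) :
  1 + q * y <> 0 ->
  dxx (fX a q p) x y = (2 * (1 + p - 2 * x) - 2 * x) / (1 + q * y).
Proof.
  intros Hden; unfold dxx; rewrite (Derive_ext _ _ _ (fun t => dx_fX a q p t y)).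
  apply is_derive_unique; auto_derive; [auto | field; auto].
Qed.

Lemma dxy_fX (a q p x y : R) :
  1 + q * y <> 0 ->
  dxy (fX a q p) x y =
  - q * ((1 - x) * (x - p) + x * (1 + p - 2 * x)) / (1 + q * y) ^ 2 - a.
Proof.
  intros Hden; unfold dxy.
  rewrite (Derive_ext _ _ _ (fun t => dx_fX a q p x t)).
  apply is_derive_unique; auto_derive; [auto | field; auto].
Qed.

(** For q > 0 the formula for the first y-derivative holds on the open
    half-line 1 + q t > 0, hence near y, which is what the second derivative sees. *)
Lemma dyy_fX (a q p x y : R) :
  0 < q -> 0 < 1 + q * y ->
  dyy (fX a q p) x y = 2 * x * (1 - x) * (x - p) * q ^ 2 / (1 + q * y) ^ 3.
Proof.
  intros Hq Hden; unfold dyy.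
  assert (Hnear : locally y (fun t => 1 + q * t <> 0)).
  { assert (Hinv : q * / q = 1) by (field; lra).
    apply (filter_imp (fun t => - / q < t)).
    - intros t Ht; apply Rgt_not_eq; nra.
    - apply open_gt; nra. }
  rewrite (Derive_ext_loc _
             (fun t => x * (- (1 - x) * (x - p) * q / (1 + q * t) ^ 2 - a))).
  - apply is_derive_unique; auto_derive; [nra | field; lra].
  - exact (filter_imp _ _ (fun t Ht => dy_fX a q p x t Ht) Hnear).
Qed.

(** The Hessian of the predator equation in the direction (v1, v2) is
    -2 b v2 (c v1 + v2); it vanishes along the nullcline direction (1, -c). *)
Lemma hess_fY_nullcline_direction (b c x y : R) : hess_quad (fY b c) x y 1 (- c) = 0.
Proof.
  assert (Hxx : dxx (fY b c) x y = 0).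
  { unfold dxx; rewrite (Derive_ext _ (fun _ => - b * y * c))
      by (intros t; exact (dx_fY b c t y)).
    apply Derive_const. }
  assert (Hxy : dxy (fY b c) x y = - b * c).
  { unfold dxy; rewrite (Derive_ext _ (fun t => - b * t * c))
      by (intros t; exact (dx_fY b c x t)).
    apply is_derive_unique; auto_derive; [auto | ring]. }
  assert (Hyy : dyy (fY b c) x y = - 2 * b).
  { unfold dyy; rewrite (Derive_ext _ (fun t => b * (1 - t - c * x) - b * t))
      by (intros t; exact (dy_fY b c x t)).
    apply is_derive_unique; auto_derive; [auto | ring]. }
  unfold hess_quad; rewrite Hxx, Hxy, Hyy.
  ring.
Qed.

(** Interior equilibria have abscissae among the roots of
    P(x) = A1 x^2 + A2 x + A3, with A1 = a c^2 q + 1, A2 = -(2acq + ac + p + 1);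
    the derivative P'(x) decides the type of the equilibrium. *)
Definition equilibrium_poly_deriv (a c q p x : R) : R :=
  2 * (a * c ^ 2 * q + 1) * x - (2 * a * c * q + a * c + p + 1).

Lemma leading_coef_pos (a c q : R) : 0 < a -> 0 < c -> 0 < q -> 0 < a * c ^ 2 * q + 1.
Proof.
  intros ha hc hq.
  assert (0 < a * c ^ 2 * q) by (repeat apply Rmult_lt_0_compat; try apply pow_lt; lra).
  lra.
Qed.

Section EquilibriumOnNullcline.

Variables a b c q p x : R.
Hypotheses (ha : 0 < a) (hb : 0 < b) (hc : 0 < c) (hq : 0 < q).
Hypotheses (hx : 0 < x) (hy : 0 < 1 - c * x).
Hypothesis hF : fX a q p x (1 - c * x) = 0.

Local Notation y := (1 - c * x).
Local Notation F := (fX a q p).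
Local Notation G := (fY b c).
Local Notation K := (/ (1 + q * y)).

Lemma denominator_pos : 0 < 1 + q * y.
Proof. nra. Qed.

Lemma equilibrium_balance : (1 - x) * (x - p) * K = a * y.
Proof.
  unfold fX in hF.
  apply Rmult_integral in hF as [Hx0 | Hbal]; [lra|].
  unfold Rdiv in Hbal; lra.
Qed.

Lemma jac11 : dx F x y = x * (1 + p - 2 * x) * K.
Proof.
  rewrite dx_fX; unfold Rdiv.
  pose proof equilibrium_balance; lra.
Qed.

Lemma jac12 : dy F x y = - x * (a + q * K * (a * y)).
Proof.
  pose proof denominator_pos as Hden.
  rewrite dy_fX by lra.
  rewrite <- equilibrium_balance.
  field; lra.
Qed.

Lemma jac12_neg : dy F x y < 0.
Proof.
  rewrite jac12.
  assert (0 < K) by (apply Rinv_0_lt_compat, denominator_pos).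
  assert (0 < q * K * (a * y)) by (repeat apply Rmult_lt_0_compat; lra).
  nra.
Qed.

Lemma jac21_neg : dx G x y < 0.
Proof.
  rewrite dx_fY.
  assert (0 < b * y * c) by (repeat apply Rmult_lt_0_compat; lra).
  lra.
Qed.

Lemma jac22 : dy G x y = - b * y.
Proof. rewrite dy_fY; ring. Qed.

Lemma jac_det_at_equilibrium :
  jac_det F G x y = b * x * y * K * equilibrium_poly_deriv a c q p x.
Proof.
  pose proof denominator_pos as Hden.
  unfold jac_det, equilibrium_poly_deriv.
  rewrite jac11, jac12, dx_fY, jac22.
  field; lra.
Qed.

Lemma hess_fX_nullcline_direction :
  hess_quad F x y 1 (- c) =
  - 2 * (a * c ^ 2 * q + 1) * x * K
  - (2 * K + 2 * c * q * x * K ^ 2) * equilibrium_poly_deriv a c q p x.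
Proof.
  pose proof denominator_pos as Hden.
  pose proof equilibrium_balance as Hbal.
  unfold hess_quad, equilibrium_poly_deriv.
  rewrite dxx_fX, dxy_fX, dyy_fX by lra.
  unfold Rdiv; rewrite <- !pow_inv.
  set (k := / (1 + q * y)) in *.
  assert (Hk : k * (1 + q * y) = 1) by (unfold k; field; lra).
  (* The difference of the two sides is a combination of the two relations. *)
  apply Rminus_diag_uniq.
  transitivity ((2 * c * q * k + 2 * c ^ 2 * q ^ 2 * x * k ^ 2) * ((1 - x) * (x - p) * k - a * y)
                - (2 * a * c + 2 * a * c ^ 2 * q * x * k) * (k * (1 + q * y) - 1)).
  - ring.
  - rewrite Hbal, Hk; ring.
Qed.

Lemma equilibrium_saddle :
  equilibrium_poly_deriv a c q p x < 0 -> is_saddle F G x y.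
Proof.
  intros Hslope; apply saddle_of_neg_det.
  rewrite jac_det_at_equilibrium.
  assert (0 < b * x * y * K)
    by (repeat apply Rmult_lt_0_compat; try apply Rinv_0_lt_compat; nra).
  nra.
Qed.

Lemma equilibrium_stable_node :
  0 < equilibrium_poly_deriv a c q p x -> is_stable_node F G x y.
Proof.
  intros Hslope.
  apply stable_node_of_sign_pattern.
  - exact jac12_neg.
  - exact jac21_neg.
  - rewrite jac22; nra.
  - rewrite jac_det_at_equilibrium.
    repeat apply Rmult_lt_0_compat; try apply Rinv_0_lt_compat; nra.
Qed.

(** P'(x) = 0: the Jacobian has rank one, with right null vector (1, -c) and
    left null vector (b y, J12); the quadratic coefficient on the centre
    direction is -2 A1 x b y / (1 + q y) <> 0. *)
Lemma equilibrium_saddle_node :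
  equilibrium_poly_deriv a c q p x = 0 -> is_saddle_node F G x y.
Proof.
  intros Hslope.
  pose proof denominator_pos as Hden.
  assert (HK : 0 < K) by (apply Rinv_0_lt_compat; lra).
  assert (Hrank1 : dx F x y = c * dy F x y).
  { assert (Hdet : jac_det F G x y = 0)
      by (rewrite jac_det_at_equilibrium, Hslope; ring).
    unfold jac_det in Hdet; rewrite jac22, dx_fY in Hdet.
    assert (Hby : 0 < b * y) by nra.
    apply (Rmult_eq_reg_l (b * y)); [nra | lra]. }
  pose proof jac12_neg as H12.
  split.
  - apply simple_zero_eigenvalue.
    + unfold jac_det; rewrite Hrank1, jac22, dx_fY; ring.
    + unfold jac_tr; rewrite Hrank1, jac22; nra.
  - exists 1, (- c), (b * y), (dy F x y).
    rewrite Hrank1, dx_fY, jac22, hess_fX_nullcline_direction,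
      hess_fY_nullcline_direction, Hslope.
    repeat split; try (left; nra); try ring.
    pose proof (leading_coef_pos a c q ha hc hq) as HA1.
    assert (0 < b * y * (2 * (a * c ^ 2 * q + 1) * x * K))
      by (repeat apply Rmult_lt_0_compat; lra).
    nra.
Qed.

End EquilibriumOnNullcline.

Theorem theorem4p3 (a b c q p : R)
  (ha : 0 < a) (hb : 0 < b) (hc : 0 < c) (hq : 0 < q)
  (hp0 : 0 < p) (hp1 : p < 1) :
  let A1 := a * c ^ 2 * q + 1 in
  let A2 := - (2 * a * c * q + a * c + p + 1) in
  let A3 := a + a * q + p in
  let Delta := A2 ^ 2 - 4 * A1 * A3 in
  let F := fX a q p in
  let G := fY b c in
  (0 < Delta ->
     let x1 := (- A2 - sqrt Delta) / (2 * A1) in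
     is_positive_equilibrium F G x1 (1 - c * x1) -> is_saddle F G x1 (1 - c * x1)) /\
  (0 < Delta ->
     let x2 := (- A2 + sqrt Delta) / (2 * A1) in
     is_positive_equilibrium F G x2 (1 - c * x2) -> is_stable_node F G x2 (1 - c * x2)) /\
  (Delta = 0 ->
     let x3 := - A2 / (2 * A1) in
     is_positive_equilibrium F G x3 (1 - c * x3) -> is_saddle_node F G x3 (1 - c * x3)).
Proof.
  intros A1 A2 A3 Delta F G.
  assert (HA1 : 0 < A1) by exact (leading_coef_pos a c q ha hc hq).
  assert (Hslope : forall s, equilibrium_poly_deriv a c q p ((- A2 + s) / (2 * A1)) = s)
    by (intros s; unfold equilibrium_poly_deriv, A2; fold A1; field; lra).
  split; [|split].
  - intros HD x1 (Hx & Hy & HF & _).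
    apply equilibrium_saddle; auto.
    replace x1 with ((- A2 + - sqrt Delta) / (2 * A1)) by (unfold x1; f_equal; ring).
    rewrite Hslope; pose proof (sqrt_lt_R0 _ HD); lra.
  - intros HD x2 (Hx & Hy & HF & _).
    apply equilibrium_stable_node; auto.
    unfold x2; rewrite Hslope; apply sqrt_lt_R0, HD.
  - intros HD x3 (Hx & Hy & HF & _).
    apply equilibrium_saddle_node; auto.
    replace x3 with ((- A2 + 0) / (2 * A1)) by (unfold x3; f_equal; ring).
    apply Hslope.
Qed.
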